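(* Let $n\ge 6$ with $n=3k$ for an integer $k$. Then $2k<\beta(H(n+1))<\beta(H(n+2))\le 2(k+1)$.
   Context: For $n\ge 5$, $H(n)$ is the graph with vertex set $V_1\cup V_2$, where $V_1=\{v_1,\dots,v_n\}$ and $V_2=\{v_iv_j: 1\le i<j\le n\}$ (each $v_iv_j$ a single vertex), and where $v_r\in V_1$ is adjacent to $v_iv_j\in V_2$ iff $r=i$ or $r=j$; there are no other edges. $d(u,v)$ is the shortest-path distance. A set $Q$ of vertices is a resolving set of a graph $G$ if any two distinct vertices $x,y$ satisfy $(d(x,q))_{q\in Q}\neq(d(y,q))_{q\in Q}$; $\beta(G)$ (the metric dimension) is the minimum size of a resolving set of $G$. *)

From mathcomp Require Import all_boot.
Set Implicit Arguments. Unset Strict Implicit. Unset Printing Implicit Defensive.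

Definition walk_of_len (T : finType) (e : rel T) (k : nat) (x y : T) : bool :=
  [exists p : k.-tuple T, path e x p && (last x p == y)].

(* shortest-path distance: least k with a walk of length k from x to y
   (shortest walk = shortest path).  For connected graphs (all used here)
   such a k < #|T| exists; otherwise the value is #|T| (unused). *)
Definition gdist (T : finType) (e : rel T) (x y : T) : nat :=
  find (fun k => walk_of_len e k x y) (iota 0 #|T|).

Definition resolving (T : finType) (e : rel T) (Q : {set T}) : bool :=
  [forall x, forall y, (x != y) ==> [exists q in Q, gdist e x q != gdist e y q]].

(* metric dimension: least size of a resolving set ([set: T] always resolves) *)
Definition metric_dim (T : finType) (e : rel T) : nat :=
  find (fun k => [exists Q : {set T}, resolving e Q && (#|Q| == k)]) (iota 0 #|T|.+1).

(* V1 = 'I_n (vertex v_r is inl r), V2 = 2-element subsets {i,j} of 'I_n (inr {i,j}) *)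
Definition isHv (n : nat) (x : 'I_n + {set 'I_n}) : bool :=
  match x with inl _ => true | inr A => #|A| == 2 end.

Definition Hv (n : nat) := {x : 'I_n + {set 'I_n} | isHv x}.

Definition Hadj (n : nat) : rel (Hv n) := fun u v =>
  match val u, val v with
  | inl r, inr A => r \in A
  | inr A, inl r => r \in A
  | _, _ => false
  end.

Definition betaH (n : nat) : nat := metric_dim (@Hadj n).

From mathcomp Require Import all_boot zify.
Set Implicit Arguments. Unset Strict Implicit. Unset Printing Implicit Defensive.

(* Distances in H(n) only take the values 0..4 and are read off the incidences: distinct
   v_r and v_s are at distance 2, v_r and v_iv_j at distance 1 or 3 according as r is in
   {i, j}, and two distinct pairs at distance 2 or 4 according as they meet.

   A resolving set Q marks some points of [n] and some pairs, which we view as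
   the edges of a graph on [n].  Resolvability forbids two unmarked isolated points, an edge
   joining two leaves (unmarked points of degree one) and, if some point is isolated, an
   unmarked point of degree two adjacent to two leaves.  Let every element of Q discharge
   weight 6: a marked point keeps it, an edge gives 4 to a leaf end and 2 to its other end,
   and 3 to each end otherwise.  Leaves receive 4, the other non-isolated points at least 4,
   and, if some point is isolated, at least 5 and at least their degree plus 3.  Counting
   weights, degrees and leaves then yields |Q| >= n - k for n = 3k+1, 3k+2 with k >= 2.

   Cut the first 3k points into triples {3i, 3i+1, 3i+2}.  The two edges
   {3i, 3i+1}, {3i+1, 3i+2} of each triple and the n - 3k remaining points resolve H(n):
   two pairs with equal distances to all of them must coincide, by a case analysis on a
   point of their symmetric difference. *)

Section Walks.
Variables (T : finType) (e : rel T).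

Lemma walk_of_len0 x y : walk_of_len e 0 x y = (x == y).
Proof.
apply/existsP/idP => [[p]|/eqP->]; first by rewrite (tuple0 p).
by exists [tuple]; rewrite /= eqxx.
Qed.

Lemma walk_of_lenS k x y :
  walk_of_len e k.+1 x y = [exists z, e x z && walk_of_len e k z y].
Proof.
apply/existsP/existsP => [[p]|[z /andP[exz /existsP[p Hp]]]].
  case/tupleP: p => z p /= /andP[/andP[exz pz] ly].
  by exists z; rewrite exz; apply/existsP; exists p; rewrite pz.
by exists [tuple of z :: p]; rewrite /= exz.
Qed.

Lemma walk_of_len1 x y : walk_of_len e 1 x y = e x y.
Proof.
rewrite walk_of_lenS; apply/existsP/idP => [[z /andP[exz]]|exy].
  by rewrite walk_of_len0 => /eqP <-.
by exists y; rewrite exy walk_of_len0 eqxx.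
Qed.

Lemma walk_of_len_cons k x z y :
  e x z -> walk_of_len e k z y -> walk_of_len e k.+1 x y.
Proof. by move=> exz wzy; rewrite walk_of_lenS; apply/existsP; exists z; rewrite exz. Qed.

Lemma gdist_eq x y d : d < #|T| -> walk_of_len e d x y ->
  (forall i, i < d -> ~~ walk_of_len e i x y) -> gdist e x y = d.
Proof.
move=> dT wd shorter; rewrite /gdist -(subnKC (ltnW dT)) iotaD find_cat.
have -> : has (walk_of_len e ^~ x ^~ y) (iota 0 d) = false.
  by apply/hasPn => i; rewrite mem_iota => /andP[_ /shorter].
by case: (#|T| - d) (subn_gt0 d #|T|) => [|m]; rewrite ?dT // size_iota /= wd addn0.
Qed.

Lemma metric_dim_le Q : resolving e Q -> metric_dim e <= #|Q|.
Proof.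
move=> resQ; rewrite /metric_dim leqNgt; apply/negP => lt.
have := before_find 0 lt; rewrite nth_iota ?add0n ?ltnS ?max_card //.
by move/negbT/existsPn => /(_ Q); rewrite resQ eqxx.
Qed.

Lemma metric_dim_ge m Q0 : resolving e Q0 ->
  (forall Q, resolving e Q -> m <= #|Q|) -> m <= metric_dim e.
Proof.
move=> resQ0 lb; rewrite /metric_dim; set P := fun k => _.
have hasP : has P (iota 0 #|T|.+1).
  apply/hasP; exists #|Q0|; first by rewrite mem_iota add0n ltnS max_card.
  by apply/existsP; exists Q0; rewrite resQ0 eqxx.
have := nth_find 0 hasP.
rewrite nth_iota ?add0n; last by move: hasP; rewrite has_find size_iota.
by case/existsP => Q /andP[resQ /eqP <-]; apply: lb.
Qed.

End Walks.

Lemma card2_set2 (T : finType) (X : {set T}) x y :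
  #|X| == 2 -> x \in X -> y \in X -> x != y -> X = [set x; y].
Proof.
move=> X2 xX yX xy; apply/eqP; rewrite eq_sym eqEcard cards2 xy (eqP X2) andbT.
by apply/subsetP => z /set2P[]->.
Qed.

Section HDistance.
Variable n : nat.

Definition Hpt (r : 'I_n) : Hv n := exist _ (inl r) isT.
Definition Hpair (A : {set 'I_n}) (A2 : #|A| == 2) : Hv n := exist _ (inr A) A2.

Definition is_pair (v : Hv n) : bool := if val v is inr _ then true else false.

Definition meets (A B : {set 'I_n}) : bool := [exists c, (c \in A) && (c \in B)].

Definition hdist (u v : Hv n) : nat :=
  match val u, val v with
  | inl r, inl s => if r == s then 0 else 2
  | inl r, inr B => if r \in B then 1 else 3
  | inr A, inl s => if s \in A then 1 else 3
  | inr A, inr B => if A == B then 0 else if meets A B then 2 else 4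
  end.

Lemma meets_in (A B : {set 'I_n}) c : c \in A -> c \in B -> meets A B.
Proof. by move=> cA cB; apply/existsP; exists c; rewrite cA cB. Qed.

Lemma meets2 (a b : 'I_n) (B : {set 'I_n}) : meets [set a; b] B = (a \in B) || (b \in B).
Proof.
apply/existsP/orP => [[c /andP[/set2P[]-> ->]]|[aB|bB]]; [left|right|..] => //.
  by exists a; rewrite set21 aB.
by exists b; rewrite set22 bB.
Qed.

Lemma Hpt_inj : injective Hpt.
Proof. by move=> r s [->]. Qed.

Lemma card2_pair (r s : 'I_n) : r != s -> #|[set r; s]| == 2.
Proof. by rewrite cards2 => ->. Qed.

Lemma card2_mem (A : {set 'I_n}) : #|A| == 2 -> exists a, a \in A.
Proof. by move=> A2; apply/set0Pn; rewrite -card_gt0 (eqP A2). Qed.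

Lemma walk_parity k (u v : Hv n) :
  walk_of_len (@Hadj n) k u v -> odd k = (is_pair u != is_pair v).
Proof.
elim: k u => [|k IH] u; first by rewrite walk_of_len0 => /eqP->; rewrite eqxx.
rewrite walk_of_lenS => /existsP[z /andP[uz /IH oddk]]; rewrite /= oddk.
by move: uz oddk; case: u => [[?|?] ?]; case: z => [[?|?] ?]; case: (is_pair v).
Qed.

Lemma hdist_parity (u v : Hv n) : odd (hdist u v) = (is_pair u != is_pair v).
Proof.
by case: u => [[r|A] ?]; case: v => [[s|B] ?]; rewrite /hdist /=; do ![case: ifP].
Qed.

Lemma hdist_eq0 (u v : Hv n) : (hdist u v == 0) = (u == v).
Proof.
apply/eqP/eqP => [|<-]; last by case: u => [[r|A] ?]; rewrite /hdist /= eqxx.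
case: u v => [[r|A] hu] [[s|B] hv]; rewrite /hdist /=; do ![case: ifP] => //.
  all: by move=> /eqP rs *; apply: val_inj; rewrite /= rs.
Qed.

Lemma hdist_le4 (u v : Hv n) : hdist u v <= 4.
Proof. by rewrite /hdist; case: (val u) (val v) => [?|?] [?|?]; do ![case: ifP]. Qed.

Lemma walk_hdist (u v : Hv n) : walk_of_len (@Hadj n) (hdist u v) u v.
Proof.
case: u v => [[r|A] hu] [[s|B] hv]; rewrite /hdist /=.
- case: eqP => [rs|/eqP rs]; first by rewrite walk_of_len0; apply/eqP/val_inj; rewrite /= rs.
  apply: (walk_of_len_cons (z := Hpair (card2_pair rs))); first by rewrite /Hadj /= set21.
  by rewrite walk_of_len1 /Hadj /= set22.
- case: ifP => rB; first by rewrite walk_of_len1.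
  have [a aB] := card2_mem hv.
  have ra : r != a by apply: contraFN rB => /eqP->.
  apply: (walk_of_len_cons (z := Hpair (card2_pair ra))); first by rewrite /Hadj /= set21.
  apply: (walk_of_len_cons (z := Hpt a)); first by rewrite /Hadj /= set22.
  by rewrite walk_of_len1.
- case: ifP => sA; first by rewrite walk_of_len1.
  have [a aA] := card2_mem hu.
  have sa : a != s by apply: contraFN sA => /eqP<-.
  apply: (walk_of_len_cons (z := Hpt a)); first by [].
  apply: (walk_of_len_cons (z := Hpair (card2_pair sa))); first by rewrite /Hadj /= set21.
  by rewrite walk_of_len1 /Hadj /= set22.
case: eqP => [AB|_]; first by rewrite walk_of_len0; apply/eqP/val_inj; rewrite /= AB.
case: ifP => [/existsP[c /andP[cA cB]]|disjAB].
  by apply: (walk_of_len_cons (z := Hpt c)); rewrite // walk_of_len1.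
have [a aA] := card2_mem hu; have [b bB] := card2_mem hv.
have ab : a != b by apply: contraFN disjAB => /eqP eab; apply: (meets_in aA); rewrite eab.
apply: (walk_of_len_cons (z := Hpt a)); first by [].
apply: (walk_of_len_cons (z := Hpair (card2_pair ab))); first by rewrite /Hadj /= set21.
apply: (walk_of_len_cons (z := Hpt b)); first by rewrite /Hadj /= set22.
by rewrite walk_of_len1.
Qed.

Lemma no_walk_below_hdist i (u v : Hv n) :
  i < hdist u v -> ~~ walk_of_len (@Hadj n) i u v.
Proof.
move=> lt; apply/negP => w; have := walk_parity w; rewrite -hdist_parity.
have := hdist_le4 u v; move: lt w; case: i => [|[|[|i]]] lt w //.
- by move: w lt; rewrite walk_of_len0 -hdist_eq0 => /eqP->.
- move: w lt; rewrite walk_of_len1.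
  by case: u v => [[r|A] hu] [[s|B] hv]; rewrite /Hadj /hdist /= => // ->.
- move: w lt; rewrite walk_of_lenS => /existsP[z /andP[uz]]; rewrite walk_of_len1 => zv.
  case: u v z uz zv => [[r|A] hu] [[s|B] hv] [[c|C] hz]; rewrite /Hadj /hdist //=.
    by case: eqP.
  by move=> cA cB; rewrite (meets_in cA cB); case: eqP.
- by move: lt; case: (hdist u v) => [|[|[|[|[|h]]]]] //; case: (i) => [|[]].
Qed.

Lemma gdist_H (u v : Hv n) : 5 <= n -> gdist (@Hadj n) u v = hdist u v.
Proof.
move=> n5; apply: gdist_eq; [|exact: walk_hdist|by move=> i; apply: no_walk_below_hdist].
have := leq_card Hpt Hpt_inj; rewrite card_ord => nHv.
by apply: leq_ltn_trans (hdist_le4 u v) (leq_trans n5 nHv).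
Qed.

Definition hresolving (Q : {set Hv n}) : Prop :=
  forall x y, x != y -> exists2 q, q \in Q & hdist x q != hdist y q.

Lemma resolvingP (Q : {set Hv n}) :
  5 <= n -> reflect (hresolving Q) (resolving (@Hadj n) Q).
Proof.
move=> n5; apply: (iffP forallP) => [res x y xy|res x].
  move/forallP/(_ y): (res x); rewrite xy => /exists_inP[q qQ].
  by rewrite !gdist_H //; exists q.
apply/forallP => y; apply/implyP => /res[q qQ dq].
by apply/exists_inP; exists q; rewrite ?gdist_H.
Qed.

Lemma hresolving_setT : hresolving [set: Hv n].
Proof.
move=> x y xy; exists y; rewrite ?inE //.
have /eqP-> : hdist y y == 0 by rewrite hdist_eq0.
by rewrite hdist_eq0.
Qed.

End HDistance.

Arguments Hpt_inj {n}.

Section LowerBound.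
Variables (n : nat) (Q : {set Hv n}).

Definition Qpts : {set 'I_n} := [set r | Hpt r \in Q].
Definition Qpairs : {set {set 'I_n}} := [set A | [exists v in Q, val v == inr A]].
Definition pairs_at (r : 'I_n) : {set {set 'I_n}} := [set A in Qpairs | r \in A].
Definition deg (r : 'I_n) : nat := #|pairs_at r|.
Definition leaf (r : 'I_n) : bool := (r \notin Qpts) && (deg r == 1).
Definition isolated (r : 'I_n) : bool := (r \notin Qpts) && (deg r == 0).
Definition inner (r : 'I_n) : bool := ~~ leaf r && ~~ isolated r.

Definition share (r : 'I_n) (A : {set 'I_n}) : nat :=
  if leaf r then 4 else if [exists s in A, (s != r) && leaf s] then 2 else 3.
Definition weight (r : 'I_n) : nat :=
  (if r \in Qpts then 6 else 0) + \sum_(A in pairs_at r) share r A.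

Lemma mem_Q q : q \in Q ->
  match val q with inl s => s \in Qpts | inr B => B \in Qpairs end.
Proof.
case: q => [[s|B] hq] qQ; rewrite /= inE.
  by rewrite (_ : Hpt s = exist _ (inl s) hq) //; apply: val_inj.
by apply/exists_inP; exists (exist _ (inr B) hq).
Qed.

Lemma Qpairs_card2 A : A \in Qpairs -> #|A| == 2.
Proof. by rewrite inE => /exists_inP[[[?|?] hv] _ /eqP //= [<-]]. Qed.

Lemma mem_pairs_at r A : (A \in pairs_at r) = (A \in Qpairs) && (r \in A).
Proof. by rewrite inE. Qed.

Lemma card_Qpts_Qpairs : #|Qpts| + #|Qpairs| <= #|Q|.
Proof.
set P := @inl _ {set 'I_n} @: Qpts; set E := @inr 'I_n _ @: Qpairs.
have disjPE : [disjoint P & E].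
  by rewrite -setI_eq0; apply/set0Pn => -[_ /setIP[/imsetP[r _ ->] /imsetP[]]].
rewrite -(card_imset Qpts (@inl_inj _ {set 'I_n})) -(card_imset Qpairs (@inr_inj 'I_n _)).
move/eqP: (leq_card_setU P E).2; rewrite disjPE => <-.
rewrite -(card_imset Q val_inj); apply/subset_leq_card/subsetP => y /setUP[]/imsetP[x].
  by rewrite inE => xQ ->; apply/imsetP; exists (Hpt x).
by rewrite inE => /exists_inP[v vQ /eqP <-] ->; apply/imsetP; exists v.
Qed.

Lemma sum_pairs_at (P : pred 'I_n) (F : 'I_n -> {set 'I_n} -> nat) :
  \sum_(r | P r) \sum_(A in pairs_at r) F r A =
  \sum_(A in Qpairs) \sum_(r in A | P r) F r A.
Proof.
rewrite (exchange_big_dep (mem Qpairs)) /=; last first.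
  by move=> r A _; rewrite mem_pairs_at => /andP[].
by apply: eq_bigr => A AQ; apply: eq_bigl => r; rewrite mem_pairs_at AQ andbC.
Qed.

Lemma isolated_notin u B : isolated u -> B \in Qpairs -> u \notin B.
Proof.
move=> /andP[_ /eqP/cards0_eq u0] BQ; apply/negP => uB.
by have := in_set0 B; rewrite -u0 mem_pairs_at BQ uB.
Qed.

Lemma leaf_pairs_eq r A B : leaf r -> A \in Qpairs -> r \in A ->
  B \in Qpairs -> r \in B -> B = A.
Proof.
case/andP => _ /cards1P[C rC] AQ rA BQ rB.
have : A \in pairs_at r by rewrite mem_pairs_at AQ.
have : B \in pairs_at r by rewrite mem_pairs_at BQ.
by rewrite rC !inE => /eqP-> /eqP->.
Qed.

Hypothesis resQ : hresolving Q.

Lemma pts_twins_eq x y : x \notin Qpts -> y \notin Qpts ->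
  {in Qpairs, forall B : {set 'I_n}, (x \in B) = (y \in B)} -> x = y.
Proof.
move=> xQ yQ sameB; apply/eqP/negPn/negP => xy.
have [q qQ] : exists2 q, q \in Q & hdist (Hpt x) q != hdist (Hpt y) q.
  by apply: resQ; rewrite (inj_eq Hpt_inj).
move: (mem_Q qQ); rewrite /hdist /=; case: (val q) => [s sQ|B BQ]; last by rewrite sameB ?eqxx.
have neq_s z : z \notin Qpts -> (z == s) = false by apply: contraNF => /eqP->.
by rewrite !neq_s.
Qed.

Lemma isolated_eq u1 u2 : isolated u1 -> isolated u2 -> u1 = u2.
Proof.
move=> u1i u2i; apply: pts_twins_eq; [exact: (proj1 (andP u1i))|exact: (proj1 (andP u2i))|].
by move=> B BQ; rewrite (negbTE (isolated_notin u1i BQ)) (negbTE (isolated_notin u2i BQ)).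
Qed.

Lemma leaf_partner_nonleaf A x y : A \in Qpairs -> x \in A -> y \in A -> x != y ->
  leaf x -> ~~ leaf y.
Proof.
move=> AQ xA yA xy lx; apply/negP => ly; case/eqP: xy.
apply: pts_twins_eq; [exact: (proj1 (andP lx))|exact: (proj1 (andP ly))|].
move=> B BQ; apply/idP/idP => [xB|yB].
  by rewrite (leaf_pairs_eq lx AQ xA BQ xB).
by rewrite (leaf_pairs_eq ly AQ yA BQ yB).
Qed.

Lemma pairs_twins_eq (X Y : {set 'I_n}) :
  #|X| == 2 -> #|Y| == 2 -> X \notin Qpairs -> Y \notin Qpairs ->
  {in Qpts, forall s, (s \in X) = (s \in Y)} ->
  {in Qpairs, forall B, meets X B = meets Y B} -> X = Y.
Proof.
move=> X2 Y2 XQ YQ samePts sameB; apply/eqP/negPn/negP => XY.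
have [q qQ] : exists2 q, q \in Q & hdist (Hpair X2) q != hdist (Hpair Y2) q.
  by apply: resQ; apply: contra XY => /eqP[->].
move: (mem_Q qQ); rewrite /hdist /=; case: (val q) => [s sQ|B BQ].
  by rewrite samePts ?eqxx.
have neq_B (Z : {set 'I_n}) : Z \notin Qpairs -> (Z == B) = false by apply: contraNF => /eqP->.
by rewrite !neq_B // sameB ?eqxx.
Qed.

Lemma isolated_no_cherry u b A1 A2 l c : isolated u -> b \notin Qpts ->
  pairs_at b = [set A1; A2] -> A1 != A2 ->
  l \in A1 -> l != b -> leaf l -> c \in A2 -> c != b -> ~~ leaf c.
Proof.
move=> ui bQ bA A12 lA1 lb ll cA2 cb; apply/negP => lc.
have : A1 \in pairs_at b by rewrite bA set21.
have : A2 \in pairs_at b by rewrite bA set22.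
rewrite !mem_pairs_at => /andP[A2Q bA2] /andP[A1Q bA1].
have lc' : l != c.
  by apply: contraNneq A12 => elc; rewrite -(leaf_pairs_eq ll A2Q _ A1Q lA1) ?elc.
have bu : b != u by apply: contraNneq (isolated_notin ui A1Q) => <-.
have [lQ cQ] := (proj1 (andP ll), proj1 (andP lc)).
suff : [set l; c] = [set b; u].
  move/setP/(_ l); rewrite set21 !inE (negbTE lb) => /esym/eqP elu.
  by move: (isolated_notin ui A1Q); rewrite -elu lA1.
apply: pairs_twins_eq; rewrite ?card2_pair //.
- apply/negP => lcQ; case/eqP: A12.
  rewrite -(leaf_pairs_eq ll A1Q lA1 lcQ (set21 _ _)).
  exact: leaf_pairs_eq lc A2Q cA2 lcQ (set22 _ _).
- by apply/negP => /(isolated_notin ui); rewrite set22.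
- move=> s sQ; rewrite !inE.
  have neq_s z : z \notin Qpts -> (s == z) = false by apply: contraNF => /eqP<-.
  by rewrite !neq_s // (proj1 (andP ui)).
move=> B BQ; rewrite !meets2 (negbTE (isolated_notin ui BQ)) orbF.
apply/idP/idP => [/orP[lB|cB]|bB].
- by rewrite (leaf_pairs_eq ll A1Q lA1 BQ lB).
- by rewrite (leaf_pairs_eq lc A2Q cA2 BQ cB).
have : B \in pairs_at b by rewrite mem_pairs_at BQ.
by rewrite bA => /set2P[]->; rewrite ?lA1 ?cA2 ?orbT.
Qed.

Lemma sum_share A : A \in Qpairs -> \sum_(r in A) share r A = 6.
Proof.
move=> AQ; have /cards2P[x [y [xy defA]]] := Qpairs_card2 AQ.
have other a b : a != b -> [exists s in [set a; b], (s != a) && leaf s] = leaf b.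
  move=> ab; apply/exists_inP/idP => [[s /set2P[]-> /andP[]//]|lb]; first by rewrite eqxx.
  by exists b; rewrite ?set22 // eq_sym ab.
have hy : [exists s in [set x; y], (s != y) && leaf s] = leaf x.
  by rewrite setUC other // eq_sym.
have [xA yA] : x \in A /\ y \in A by rewrite defA set21 set22.
have := leaf_partner_nonleaf AQ xA yA xy.
rewrite defA big_setU1 ?inE // big_set1 /share other // hy.
by case: (leaf x); case: (leaf y) => // /(_ isT).
Qed.

Lemma sum_weight : \sum_r weight r = 6 * (#|Qpts| + #|Qpairs|).
Proof.
rewrite big_split /= -big_mkcond sum_pairs_at sum_nat_const.
rewrite (eq_bigr (fun _ => 6)) => [|A AQ].
  by rewrite sum_nat_const mulnDr !(mulnC 6).
by rewrite -(sum_share AQ); apply: eq_bigl => r; rewrite andbT.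
Qed.

Lemma sum_deg : \sum_r deg r = 2 * #|Qpairs|.
Proof.
under eq_bigr do rewrite /deg -sum1_card.
rewrite (sum_pairs_at xpredT (fun _ _ => 1)) (eq_bigr (fun _ => 2)) => [|A AQ].
  by rewrite sum_nat_const mulnC.
by rewrite -(eqP (Qpairs_card2 AQ)) -sum1_card; apply: eq_bigl => r; rewrite andbT.
Qed.

Lemma card_leaf_le : #|leaf| <= #|Qpairs|.
Proof.
have -> : #|leaf| = \sum_(r | leaf r) \sum_(A in pairs_at r) 1.
  by rewrite -sum1_card; apply: eq_bigr => r /andP[_ /eqP]; rewrite sum1_card.
rewrite sum_pairs_at -sum1_card; apply: leq_sum => A AQ.
have /cards2P[x [y [xy defA]]] := Qpairs_card2 AQ.
have [xA yA] : x \in A /\ y \in A by rewrite defA set21 set22.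
have := leaf_partner_nonleaf AQ xA yA xy.
rewrite defA big_mkcondr /= big_setU1 ?inE // big_set1.
by case: (leaf x); case: (leaf y) => // /(_ isT).
Qed.

Lemma weight_leaf r : leaf r -> weight r = 4.
Proof.
move=> lr; have /andP[rQ /cards1P[A rA]] := lr.
by rewrite /weight (negbTE rQ) rA big_set1 /share lr.
Qed.

Lemma weight_nonleaf r :
  ~~ leaf r -> 2 * deg r + (if r \in Qpts then 6 else 0) <= weight r.
Proof.
move=> nlr; rewrite /weight /deg addnC leq_add2l mulnC -sum_nat_const.
by apply: leq_sum => A _; rewrite /share (negbTE nlr); case: ifP.
Qed.

Lemma inner_deg r : inner r -> r \notin Qpts -> 2 <= deg r.
Proof.
by case/andP; rewrite /leaf /isolated => + + rQ; rewrite rQ; case: (deg r) => [|[|]].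
Qed.

Lemma weight_inner r : inner r -> 4 <= weight r.
Proof.
move=> ir; have := weight_nonleaf (proj1 (andP ir)).
by case: ifPn => [_|/(inner_deg ir)]; lia.
Qed.

Lemma weight_inner_isolated u r : isolated u -> inner r ->
  5 <= weight r /\ deg r + 3 <= weight r.
Proof.
move=> ui ir; have nlr := proj1 (andP ir); have := weight_nonleaf nlr.
case: ifPn => [_|rQ]; first lia.
have := inner_deg ir rQ; case: (ltngtP (deg r) 2) => [||d2]; try lia.
suff : 5 <= weight r by lia.
have /cards2P[A1 [A2 [A12 rA]]] : #|pairs_at r| == 2 by rewrite -/(deg r) d2.
rewrite /weight (negbTE rQ) rA big_setU1 ?inE // big_set1 /share (negbTE nlr).
case: ifP => [/exists_inP[l lA1 /andP[lr ll]]|]; last by case: ifP.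
case: ifP => [/exists_inP[c cA2 /andP[cr lc]]|//].
by rewrite (negbTE (isolated_no_cherry ui rQ rA A12 lA1 lr ll cA2 cr)) in lc.
Qed.

Lemma split_leaf_isolated_inner (F : 'I_n -> nat) : \sum_r F r =
  \sum_(r | leaf r) F r + \sum_(r | isolated r) F r + \sum_(r | inner r) F r.
Proof.
rewrite (bigID leaf) /= -addnA; congr (_ + _); rewrite (bigID isolated) /=; congr (_ + _).
apply: eq_bigl => r; rewrite /leaf /isolated.
by case: (r \in Qpts); case: (deg r) => [|[|]].
Qed.

Lemma hresolving_card_lb k : 2 <= k -> 3 * k < n -> n <= 3 * k + 2 -> n - k <= #|Q|.
Proof.
move=> k2 kn nk; have cardQ := card_Qpts_Qpairs.
have := split_leaf_isolated_inner weight; rewrite sum_weight.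
have := split_leaf_isolated_inner deg; rewrite sum_deg.
have := split_leaf_isolated_inner (fun _ => 1); rewrite sum1_card card_ord.
have leafQ : \sum_(r | leaf r) 1 <= #|Qpairs| by rewrite sum1_card; exact: card_leaf_le.
have -> : \sum_(r | leaf r) weight r = 4 * \sum_(r | leaf r) 1.
  by rewrite big_distrr; apply: eq_bigr => r /weight_leaf.
have -> : \sum_(r | leaf r) deg r = \sum_(r | leaf r) 1.
  by apply: eq_bigr => r /andP[_ /eqP].
have -> : \sum_(r | isolated r) deg r = 0 by apply: big1 => r /andP[_ /eqP].
have wI4 : 4 * \sum_(r | inner r) 1 <= \sum_(r | inner r) weight r.
  by rewrite big_distrr; apply: leq_sum => r /weight_inner.
case: (pickP isolated) => [u ui|noiso].
  have -> : \sum_(r | isolated r) 1 = 1.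
    rewrite (big_pred1 u) // => r; apply/idP/eqP => [ri|->//].
    exact: isolated_eq ri ui.
  have wI5 : 5 * \sum_(r | inner r) 1 <= \sum_(r | inner r) weight r.
    by rewrite big_distrr; apply: leq_sum => r /(weight_inner_isolated ui)[].
  have wId : \sum_(r | inner r) deg r + 3 * \sum_(r | inner r) 1
             <= \sum_(r | inner r) weight r.
    by rewrite big_distrr -big_split; apply: leq_sum => r /(weight_inner_isolated ui)[].
  lia.
have -> : \sum_(r | isolated r) 1 = 0 by exact: big_pred0 noiso.
lia.
Qed.

End LowerBound.

Section UpperBound.
Variables n k : nat.

(* For i < k, triple_edge i false = {3i, 3i+1}, triple_edge i true = {3i+1, 3i+2}
   and triple_ends i = {3i, 3i+2}. *)
Definition triple_edge (i : nat) (b : bool) : {set 'I_n} :=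
  [set r : 'I_n | (r %/ 3 == i) && (r %% 3 != if b then 0 else 2)].
Definition triple_ends (i : nat) : {set 'I_n} :=
  [set r : 'I_n | (r %/ 3 == i) && (r %% 3 != 1)].
Definition triple_edges : {set {set 'I_n}} := [set triple_edge ib.1 ib.2 | ib : 'I_k * bool].

Definition triple_basis : {set Hv n} :=
  [set v : Hv n | match val v with inl r => 3 * k <= r | inr A => A \in triple_edges end].

Lemma eq_divmod3 (x y : 'I_n) : x %/ 3 = y %/ 3 -> x %% 3 = y %% 3 -> x = y.
Proof. by move=> qxy rxy; apply: val_inj; rewrite /= (divn_eq x 3) (divn_eq y 3) qxy rxy. Qed.

Lemma mem_triple_edge_self (r : 'I_n) : r \in triple_edge (r %/ 3) (r %% 3 == 2).
Proof. by rewrite inE eqxx /=; case: ifP => /eqP; lia. Qed.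

Lemma triple_edge_pair (w v : 'I_n) : w %/ 3 = v %/ 3 -> w %% 3 = 1 -> v %% 3 != 1 ->
  triple_edge (w %/ 3) (v %% 3 == 2) = [set w; v].
Proof.
move=> qwv rw rv; apply/setP => r; rewrite !inE.
apply/idP/idP => [/andP[/eqP qr rr]|/orP[]/eqP->].
- case: (r %% 3 =P 1) => [rr1|/eqP rr1].
    by rewrite (@eq_divmod3 r w) ?eqxx ?rr1.
  rewrite (@eq_divmod3 r v) ?eqxx ?orbT ?qr //.
  by move: rr rr1 rv; case: ifP => /eqP; lia.
- by rewrite eqxx rw; case: ifP.
- by rewrite qwv eqxx /=; case: ifP => /eqP; lia.
Qed.

Lemma card_triple_edge i b : i < k -> 3 * k <= n -> #|triple_edge i b| == 2.
Proof.
move=> ik kn; have w_lt : 3 * i + 1 < n by lia.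
have v_lt : 3 * i + (if b then 2 else 0) < n by case: b; lia.
pose w := Ordinal w_lt; pose v := Ordinal v_lt.
have -> : i = w %/ 3 by rewrite /=; lia.
have -> : b = (v %% 3 == 2) by rewrite /=; case: (b); apply/esym/eqP; lia.
rewrite triple_edge_pair ?card2_pair /=; try by case: (b); lia.
by apply/eqP => -[]; case: (b); lia.
Qed.

Lemma triple_pair_in_edges (X : {set 'I_n}) (w v : 'I_n) :
  #|X| == 2 -> w \in X -> v \in X -> w < 3 * k ->
  w %/ 3 = v %/ 3 -> w %% 3 = 1 -> v %% 3 != 1 -> X \in triple_edges.
Proof.
move=> X2 wX vX wk qwv rw rv.
have wv : w != v by apply: contra rv => /eqP<-; rewrite rw.
have wk' : w %/ 3 < k by lia.
rewrite (card2_set2 X2 wX vX wv) -(triple_edge_pair qwv rw rv).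
by apply/imsetP; exists (Ordinal wk', v %% 3 == 2).
Qed.

Definition same_high (A B : {set 'I_n}) : Prop :=
  forall z : 'I_n, 3 * k <= z -> (z \in A) = (z \in B).
Definition same_meets (A B : {set 'I_n}) : Prop :=
  forall i b, i < k -> meets A (triple_edge i b) = meets B (triple_edge i b).

Lemma twin_of_mid_is_ends (A B : {set 'I_n}) x : #|B| == 2 -> same_meets A B ->
  x \in A -> x \notin B -> x < 3 * k -> x %% 3 = 1 -> B = triple_ends (x %/ 3).
Proof.
move=> B2 AB xA xB xk rx.
have end_in b : exists2 y, y \in B & y %/ 3 = x %/ 3 /\ y %% 3 = if b then 2 else 0.
  have : meets A (triple_edge (x %/ 3) b) by apply: (meets_in xA); rewrite inE eqxx rx; case: b.
  rewrite AB; last by lia.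
  case/existsP => y /andP[yB]; rewrite inE => /andP[/eqP qy ry]; exists y => //.
  have : y %% 3 != 1 by apply: contraNneq xB => ry1; rewrite -(@eq_divmod3 y x) ?rx.
  by split=> //; move: ry; case: b; lia.
have [[y0 y0B [qy0 ry0]] [y2 y2B [qy2 ry2]]] := (end_in false, end_in true).
have y02 : y0 != y2 by apply/eqP => e; move: ry0 ry2; rewrite e => ->.
apply/setP => r; rewrite (card2_set2 B2 y0B y2B y02) !inE.
apply/idP/idP => [/orP[]/eqP->|/andP[/eqP qr rr]]; first by rewrite qy0 ry0 eqxx.
  by rewrite qy2 ry2 eqxx.
have [rr0|rr2] : r %% 3 = 0 \/ r %% 3 = 2 by lia.
  by rewrite (@eq_divmod3 r y0) ?eqxx ?qy0 ?ry0.
by rewrite (@eq_divmod3 r y2) ?eqxx ?orbT ?qy2 ?ry2.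
Qed.

Lemma twin_diff_ends (A B : {set 'I_n}) x : #|A| == 2 -> #|B| == 2 -> A \notin triple_edges ->
  same_meets A B -> x \in A -> x \notin B -> x < 3 * k ->
  A = triple_ends (x %/ 3) \/ B = triple_ends (x %/ 3).
Proof.
move=> A2 B2 AE AB xA xB xk.
case: (x %% 3 =P 1) => [rx|/eqP rx]; first by right; apply: twin_of_mid_is_ends B2 AB xA xB xk rx.
left; have := meets_in xA (mem_triple_edge_self x); rewrite AB; last by lia.
case/existsP => y /andP[yB]; rewrite inE => /andP[/eqP qy ry].
have ry1 : y %% 3 = 1.
  have : y %% 3 != x %% 3 by apply: contraNneq xB => e; rewrite -(eq_divmod3 qy e).
  by move: ry rx; case: ifP => /eqP; lia.
have yA : y \notin A.
  by apply/negP => yA; move: AE; rewrite (triple_pair_in_edges A2 yA xA _ qy ry1 rx) //; lia.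
rewrite -qy; apply: twin_of_mid_is_ends A2 (fun i b ik => esym (AB i b ik)) yB yA _ ry1; lia.
Qed.

Lemma ends_twin_eq (A B : {set 'I_n}) i :
  i < k -> A = triple_ends i -> #|A| == 2 -> #|B| == 2 -> B \notin triple_edges ->
  same_high A B -> same_meets A B -> B = A.
Proof.
move=> ik defA A2 B2 BE hAB mAB.
have qB y : y \in B -> y %/ 3 = i.
  move=> yB; have yk : y < 3 * k.
    rewrite ltnNge; apply/negP => ky; move: yB; rewrite -hAB // defA inE => /andP[/eqP]; lia.
  have := meets_in yB (mem_triple_edge_self y); rewrite -mAB; last by lia.
  by case/existsP => a /andP[]; rewrite defA !inE => /andP[/eqP <- _] /andP[/eqP ->].
have rB y : y \in B -> y %% 3 != 1.
  move=> yB; apply/eqP => ry.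
  have [y' y'B y'y] : exists2 y', y' \in B & y' != y.
    have /cards2P[a [b [ab defB]]] := B2.
    by case: (eqVneq y a) => [->|ya]; [exists b|exists a]; rewrite ?defB ?set21 ?set22 // eq_sym.
  have ry' : y' %% 3 != 1.
    by apply: contra y'y => /eqP ry'; apply/eqP/eq_divmod3; rewrite ?qB ?ry ?ry'.
  have [qy qy'] := (qB y yB, qB y' y'B).
  by move: BE; rewrite (triple_pair_in_edges B2 yB y'B _ _ ry ry') //; lia.
apply/eqP; rewrite eqEcard (eqP A2) (eqP B2) leqnn andbT.
by apply/subsetP => y yB; rewrite defA inE qB // eqxx rB.
Qed.

Lemma triple_twins_eq (A B : {set 'I_n}) :
  #|A| == 2 -> #|B| == 2 -> A \notin triple_edges -> B \notin triple_edges ->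
  same_high A B -> same_meets A B -> A = B.
Proof.
move=> A2 B2 AE BE hAB mAB; apply/eqP/negPn/negP => AB.
have [x xA xB] : exists2 x, x \in A & x \notin B.
  by apply/subsetPn; apply: contra AB => sAB; rewrite eqEcard sAB (eqP A2) (eqP B2).
have xk : x < 3 * k by rewrite ltnNge; apply: contra xB => kx; rewrite -hAB.
have hBA : same_high B A by move=> z kz; rewrite hAB.
have mBA : same_meets B A by move=> i b ik; rewrite mAB.
have ik : x %/ 3 < k by lia.
case: (twin_diff_ends A2 B2 AE mAB xA xB xk) => [defA|defB].
  by move: AB; rewrite (ends_twin_eq ik defA A2 B2 BE hAB mAB) eqxx.
by move: AB; rewrite (ends_twin_eq ik defB B2 A2 AE hBA mBA) eqxx.
Qed.

Lemma card_high : #|[set r : 'I_n | 3 * k <= r]| = n - 3 * k.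
Proof.
rewrite -sum1_card (eq_bigl (fun r : 'I_n => true && (3 * k <= r))) => [|r]; last first.
  by rewrite inE.
by rewrite -(big_geq_mkord (3 * k) n xpredT (fun _ => 1)) sum_nat_const_nat muln1.
Qed.

Lemma card_triple_basis : #|triple_basis| <= (n - 3 * k) + 2 * k.
Proof.
set high := [set r : 'I_n | 3 * k <= r].
have basis_vals : val @: triple_basis \subset inl @: high :|: @inr 'I_n _ @: triple_edges.
  apply/subsetP => _ /imsetP[[[r|A] hv] + ->]; rewrite inE /= => Qv.
    by rewrite inE; apply/orP; left; apply/imsetP; exists r; rewrite ?inE.
  by rewrite inE; apply/orP; right; apply/imsetP; exists A.
rewrite -(card_imset triple_basis val_inj) -card_high.
apply: leq_trans (subset_leq_card basis_vals) _; apply: leq_trans (leq_card_setU _ _) _.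
apply: leq_add; first exact: leq_imset_card.
apply: leq_trans (leq_imset_card _ _) _; apply: leq_trans (leq_imset_card _ _) _.
by rewrite card_prod card_ord card_bool mulnC.
Qed.

Lemma triple_edge_in_edges i b : i < k -> triple_edge i b \in triple_edges.
Proof. by move=> ik; apply/imsetP; exists (Ordinal ik, b). Qed.

Lemma triple_edge_separates (r s : 'I_n) : r < 3 * k -> s < 3 * k -> r != s ->
  exists2 i, i < k & exists b, (r \in triple_edge i b) != (s \in triple_edge i b).
Proof.
move=> rk sk rs; exists (r %/ 3); first by lia.
case: (r %/ 3 =P s %/ 3) => [q|/eqP q]; last first.
  by exists (r %% 3 == 2); rewrite mem_triple_edge_self inE (eq_sym (s %/ 3)) (negbTE q).
have {}rs : r %% 3 != s %% 3 by apply: contra rs => /eqP /(eq_divmod3 q) ->.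
exists ((r %% 3 == 0) || (s %% 3 == 0)); rewrite !inE q eqxx /=.
by move: rs; case: ifP => /orP; lia.
Qed.

Lemma triple_basis_pairs_eq (A B : {set 'I_n}) (A2 : #|A| == 2) (B2 : #|B| == 2) :
  3 * k <= n ->
  {in triple_basis, forall q, hdist (Hpair A2) q = hdist (Hpair B2) q} -> A = B.
Proof.
move=> kn same.
have edge_twin (X Y : {set 'I_n}) (X2 : #|X| == 2) (Y2 : #|Y| == 2) :
    {in triple_basis, forall q, hdist (Hpair X2) q = hdist (Hpair Y2) q} ->
    X \in triple_edges -> X = Y.
  move=> sameXY XE; have := sameXY (Hpair X2).
  rewrite inE /= XE /hdist /= eqxx => /(_ isT).
  by case: eqP => // _; case: ifP.
case: (boolP (A \in triple_edges)) => [AE|AE]; first exact: edge_twin same AE.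
case: (boolP (B \in triple_edges)) => [BE|BE].
  by apply/esym/(edge_twin _ _ B2 A2) => // q /same.
apply: triple_twins_eq => // [z kz|i b ik].
  by have := same (Hpt z); rewrite inE /hdist /= => /(_ kz); do ![case: ifP].
have E2 := card_triple_edge b ik kn; have EE := triple_edge_in_edges b ik.
have := same (Hpair E2); rewrite inE /= EE /hdist /= => /(_ isT).
have neqE (X : {set 'I_n}) : X \notin triple_edges -> (X == triple_edge i b) = false.
  by apply: contraNF => /eqP->.
by rewrite !neqE //; do ![case: ifP].
Qed.

Lemma triple_basis_resolving : 3 * k < n -> hresolving triple_basis.
Proof.
move=> kn; have kn' : 3 * k <= n by lia.
case=> [[r|A] hx] [[s|B] hy] xy.
- have rs : r != s by apply: contra xy => /eqP rs; apply/eqP/val_inj; rewrite /= rs.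
  have sr : (s == r) = false by rewrite eq_sym (negbTE rs).
  case: (leqP (3 * k) r) => kr.
    by exists (Hpt r); rewrite ?inE // /hdist /= eqxx sr.
  case: (leqP (3 * k) s) => ks.
    by exists (Hpt s); rewrite ?inE // /hdist /= eqxx (negbTE rs).
  have [i ik [b sep]] := triple_edge_separates kr ks rs.
  exists (Hpair (card_triple_edge b ik kn')); first by rewrite inE /= triple_edge_in_edges.
  by rewrite /hdist /=; move: sep; do ![case: ifP].
- exists (Hpt (Ordinal kn)); first by rewrite inE /= leqnn.
  by rewrite /hdist /=; do ![case: ifP].
- exists (Hpt (Ordinal kn)); first by rewrite inE /= leqnn.
  by rewrite /hdist /=; do ![case: ifP].
apply/exists_inP; apply: contraNT xy; rewrite negb_exists_in => /forall_inP same.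
have AB := triple_basis_pairs_eq kn' (fun q qQ => eqP (negbNE (same q qQ))).
by apply/eqP/val_inj; rewrite /= AB.
Qed.

End UpperBound.

Lemma betaH_eq n k : 2 <= k -> 3 * k < n -> n <= 3 * k + 2 -> betaH n = n - k.
Proof.
move=> k2 kn nk; have n5 : 5 <= n by lia.
apply/eqP; rewrite /betaH eqn_leq; apply/andP; split.
  apply: leq_trans (metric_dim_le (introT (resolvingP _ n5) (triple_basis_resolving kn))) _.
  by apply: leq_trans (card_triple_basis n k) _; lia.
apply: (metric_dim_ge (introT (resolvingP _ n5) (@hresolving_setT n))).
move=> Q /(resolvingP _ n5) resQ.
exact (hresolving_card_lb resQ k2 kn nk).
Qed.

Theorem corollary3p1 (n k : nat) :
  6 <= n -> n = 3 * k ->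
  2 * k < betaH (n + 1) /\ betaH (n + 1) < betaH (n + 2) /\ betaH (n + 2) <= 2 * (k + 1).
Proof.
move=> n6 nk; rewrite (@betaH_eq (n + 1) k) ?(@betaH_eq (n + 2) k); lia.
Qed.
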